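(* Let $C$ be a parity complex. For every $x\in C$, $$x^{++}\cap x^{--}=x^{-+}\cap x^{+-}=\emptyset,$$ $$x^{-\mp}=x^{+\mp}=x^{--}\cap x^{+-},$$ $$x^{-\pm}=x^{+\pm}=x^{-+}\cap x^{++}.$$
   Context: A parity complex consists of a set $C=\bigsqcup_{n\ge 0}C_n$ graded by dimension, together with, for each $n\ge 0$ and each $x\in C_{n+1}$, two disjoint, non-empty, finite subsets $x^-,x^+\subseteq C_n$ (for $x\in C_0$ put $x^-=x^+=\emptyset$), subject to Axioms 1, 2, 3A, 3B below. Notation: for $S\subseteq C$, $S^-=\bigcup_{w\in S}w^-$ and $S^+=\bigcup_{w\in S}w^+$; iterated faces are written $x^{-+}=(x^-)^+$, $x^{++}=(x^+)^+$, etc. Also $S^\mp=S^-\setminus S^+$ and $S^\pm=S^+\setminus S^-$, and $x^{-\mp}=(x^-)^\mp$, $x^{+\pm}=(x^+)^\pm$, etc. For $S,T\subseteq C$ write $S\perp T$ when $S^-\cap T^-=\emptyset$ and $S^+\cap T^+=\emptyset$; for elements, $x\perp y$ means $\{x\}\perp\{y\}$. With $S_n=S\cap C_n$, a set $S\subseteq C$ is well-formed when $S_0$ has at most one element and for every $n>0$ and all $x,y\in S_n$ with $x\ne y$ we have $x\perp y$. Write $x<y$ when $x^+\cap y^-\neq\emptyset$, and let $\lhd$ be the reflexive transitive closure of $<$. Axioms: (1) for all $x$, $x^{++}\cup x^{--}=x^{-+}\cup x^{+-}$; (2) for all $x$, $x^-$ and $x^+$ are well-formed; (3A) $x\lhd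 y$ and $y\lhd x$ imply $x=y$; (3B) if $x\lhd y$ then there is no $z\in C$ with $x\in z^+$ and $y\in z^-$, and no $z\in C$ with $y\in z^+$ and $x\in z^-$. *)

From mathcomp Require Import all_boot.
From mathcomp Require Import boolp classical_sets cardinality.
From Stdlib Require Import Relations.Relation_Operators.

Set Implicit Arguments. Unset Strict Implicit. Unset Printing Implicit Defensive.
Local Open Scope classical_set_scope.

Section ParityComplex.
Variables (C : Type) (dim : C -> nat) (mi pl : C -> set C).

Definition setm (S : set C) : set C := \bigcup_(w in S) mi w.
Definition setp (S : set C) : set C := \bigcup_(w in S) pl w.
Definition setmp (S : set C) : set C := setm S `\` setp S.
Definition setpm (S : set C) : set C := setp S `\` setm S.

Definition perp (S T : set C) : Prop :=
  setm S `&` setm T = set0 /\ setp S `&` setp T = set0.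

Definition well_formed (S : set C) : Prop :=
  (forall a b, S a -> S b -> dim a = 0 -> dim b = 0 -> a = b) /\
  (forall n x y, 0 < n -> S x -> S y -> dim x = n -> dim y = n -> x <> y ->
     perp [set x] [set y]).

Definition lt_pc (x y : C) : Prop := pl x `&` mi y !=set0.
Definition lhd (x y : C) : Prop := clos_refl_trans C lt_pc x y.

Definition is_parity_complex : Prop :=
  (forall x, dim x = 0 -> mi x = set0 /\ pl x = set0) /\
  (forall x n, dim x = n.+1 ->
     mi x `<=` [set y | dim y = n] /\ pl x `<=` [set y | dim y = n] /\
     mi x `&` pl x = set0 /\ mi x !=set0 /\ pl x !=set0 /\
     finite_set (mi x) /\ finite_set (pl x)) /\
  (forall x, setp (pl x) `|` setm (mi x) = setp (mi x) `|` setm (pl x)) /\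
  (forall x, well_formed (mi x) /\ well_formed (pl x)) /\
  (forall x y, lhd x y -> lhd y x -> x = y) /\
  (forall x y, lhd x y ->
     (~ exists z, pl z x /\ mi z y) /\ (~ exists z, pl z y /\ mi z x)).

End ParityComplex.

From mathcomp Require Import all_boot.
From mathcomp Require Import boolp classical_sets.
From Stdlib Require Import Relations.Relation_Operators.
Set Implicit Arguments. Unset Strict Implicit. Unset Printing Implicit Defensive.
Local Open Scope classical_set_scope.

(* A common element y of x^{++} and x^{--} lies in u^+ and v^- for some u in
   x^+ and v in x^-, so u < v while x has u in x^+ and v in x^-, contradicting
   Axiom 3B; likewise for x^{-+} and x^{+-}. Both sides of Axiom 1,
   x^{++} u x^{--} = x^{-+} u x^{+-}, are therefore disjoint unions, and the
   remaining identities are pure set algebra. *)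

Lemma setD_cover_disjoint (T : Type) (B D E : set T) :
  B `<=` D `|` E -> D `&` E = set0 -> B `\` D = B `&` E.
Proof.
move=> sB dDE; apply/seteqP; split=> y /=.
- by move=> [By nDy]; split=> //; case: (sB y By).
- move=> [By Ey]; split=> // Dy.
  by have : (D `&` E) y by []; rewrite dDE.
Qed.

Lemma setD_of_disjoint_union_eq (T : Type) (A B D E : set T) :
  A `&` B = set0 -> D `&` E = set0 -> A `|` B = D `|` E ->
  [/\ B `\` D = B `&` E, E `\` A = B `&` E,
      D `\` B = D `&` A & A `\` E = D `&` A].
Proof.
move=> dAB dDE eU.
have sDE (S : set T) : S `<=` A `|` B -> S `<=` D `|` E by rewrite eU.
have sAB (S : set T) : S `<=` D `|` E -> S `<=` A `|` B by rewrite eU.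
split.
- by apply: setD_cover_disjoint => //; apply: sDE => y By; right.
- rewrite [RHS]setIC; apply: setD_cover_disjoint => //.
  by apply: sAB => y Ey; right.
- apply: setD_cover_disjoint; last by rewrite setIC.
  by rewrite setUC; apply: sAB => y Dy; left.
- rewrite [RHS]setIC; apply: setD_cover_disjoint; last by rewrite setIC.
  by rewrite setUC; apply: sDE => y Ay; left.
Qed.

Section ParityComplexFaces.
Variables (C : Type) (dim : C -> nat) (mi pl : C -> set C).
Hypothesis HC : is_parity_complex dim mi pl.

Lemma parity_axiom1 x :
  setp pl (pl x) `|` setm mi (mi x) = setp pl (mi x) `|` setm mi (pl x).
Proof. by case: HC => _ [_ [ax1 _]]. Qed.

Lemma no_face_pl_mi_of_lt u v z : lt_pc mi pl u v -> pl z u -> mi z v -> False.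
Proof.
move=> uv zu zv; case: HC => _ [_ [_ [_ [_ ax3B]]]].
by apply: (proj1 (ax3B u v (rt_step _ _ _ _ uv))); exists z.
Qed.

Lemma no_face_mi_pl_of_lt u v z : lt_pc mi pl u v -> mi z u -> pl z v -> False.
Proof.
move=> uv zu zv; case: HC => _ [_ [_ [_ [_ ax3B]]]].
by apply: (proj2 (ax3B u v (rt_step _ _ _ _ uv))); exists z.
Qed.

Lemma face_pp_mm_disjoint x : setp pl (pl x) `&` setm mi (mi x) = set0.
Proof.
apply/seteqP; split=> y //= [[u xu uy] [v xv vy]].
by apply: (@no_face_pl_mi_of_lt u v x) => //; exists y.
Qed.

Lemma face_mp_pm_disjoint x : setp pl (mi x) `&` setm mi (pl x) = set0.
Proof.
apply/seteqP; split=> y //= [[u xu uy] [v xv vy]].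
by apply: (@no_face_mi_pl_of_lt u v x) => //; exists y.
Qed.

End ParityComplexFaces.

Theorem proposition1p1 (C : Type) (dim : C -> nat) (mi pl : C -> set C)
  (HC : is_parity_complex dim mi pl) (x : C) :
  (* x^{++} ∩ x^{--} = ∅ and x^{-+} ∩ x^{+-} = ∅ *)
  setp pl (pl x) `&` setm mi (mi x) = set0 /\
  setp pl (mi x) `&` setm mi (pl x) = set0 /\
  (* x^{-∓} = x^{+∓} = x^{--} ∩ x^{+-} *)
  setmp mi pl (mi x) = setmp mi pl (pl x) /\
  setmp mi pl (pl x) = setm mi (mi x) `&` setm mi (pl x) /\
  (* x^{-±} = x^{+±} = x^{-+} ∩ x^{++} *)
  setpm mi pl (mi x) = setpm mi pl (pl x) /\
  setpm mi pl (pl x) = setp pl (mi x) `&` setp pl (pl x).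
Proof.
have dpm := face_pp_mm_disjoint HC x.
have dmp := face_mp_pm_disjoint HC x.
have [e1 e2 e3 e4] :=
  setD_of_disjoint_union_eq dpm dmp (parity_axiom1 HC x).
by rewrite /setmp /setpm e1 e2 e3 e4.
Qed.
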